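(* Let $n\ge3$ and let $G$ be a spanning subgraph of $CT_n$ containing no cycle of length $6$. Then for every edge $e$ of $CT_n$ there are at most two $4$-cycles $H$ of $CT_n$ with $e\in E(H)$ such that the three edges of $H$ other than $e$ all belong to $G$.
   Context: $CT_n$ is the graph with vertex set the symmetric group $\mathrm{S}_n$ on $\{1,\dots,n\}$ in which $\{x,y\}$ is an edge iff $yx^{-1}$ is a transposition. *)

From mathcomp Require Import all_boot all_fingroup.
Set Implicit Arguments. Unset Strict Implicit. Unset Printing Implicit Defensive.
Local Open Scope group_scope.

Definition is_transposition (n : nat) (z : {perm 'I_n}) : bool :=
  [exists i : 'I_n, exists j : 'I_n, (i != j) && (z == tperm i j)].

(* Adjacency of CT_n: {x,y} is an edge iff y x^{-1} is a transposition.
   In mathcomp, (x^-1 * y) is the map a |-> y (x^-1 a), i.e. y o x^{-1}. *)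
Definition CT (n : nat) : rel {perm 'I_n} :=
  fun x y => is_transposition (x^-1 * y).

Definition is_edge_of (n : nat) (g : rel {perm 'I_n}) (f : {set {perm 'I_n}}) : bool :=
  [exists u, exists v, (f == [set u; v]) && g u v].

Definition cyc4_edges (n : nat) (a b c d : {perm 'I_n}) : {set {set {perm 'I_n}}} :=
  [set [set a; b]; [set b; c]; [set c; d]; [set d; a]].

Definition is_C4_of_CT (n : nat) (H : {set {set {perm 'I_n}}}) : bool :=
  [exists a, exists b, exists c, exists d,
     [&& uniq [:: a; b; c; d], CT a b, CT b c, CT c d, CT d a
       & H == cyc4_edges a b c d]].

Definition has_C6 (n : nat) (g : rel {perm 'I_n}) : Prop :=
  exists v : 'I_6 -> {perm 'I_n},
    injective v /\ forall i : 'I_6, g (v i) (v (ordS i)).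

From mathcomp Require Import all_boot all_fingroup.
Set Implicit Arguments. Unset Strict Implicit. Unset Printing Implicit Defensive.
Local Open Scope group_scope.

(* A 4-cycle H of CT_n through the edge xy whose three other
   edges lie in G is the cycle of a G-path x - a - b - y, and distinct such H
   give distinct pairs (a, b).
   1. Two such paths with a <> a' and b <> b' close up into the 6-cycle
      x a b y b' a' of G (a <> b' and b <> a' since CT_n is bipartite: every
      edge changes the parity of the permutation).  So in a C6-free G any two
      pairs agree in exactly one coordinate.
   2. Then three distinct pairs share the same coordinate: a common a with
      three distinct b's, or a common b with three distinct a's.
   3. In the first case a and y have four common neighbours x, b1, b2, b3 in
      CT_n (the second case is symmetric).  But two distinct permutations u, w
      have at most three common neighbours: u^-1 w is a product t t' of two
      transpositions, and such a product has at most three possible first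
      factors t. *)

Lemma uniq4P (T : eqType) (p q r s : T) :
  reflect [/\ p != q, p != r, p != s & [/\ q != r, q != s & r != s]]
          (uniq [:: p; q; r; s]).
Proof.
rewrite /= !inE !negb_or !andbT -!andbA.
by apply: (iffP idP) => [/and5P[? ? ? ? /andP[]]|[-> -> -> [-> -> ->]]].
Qed.

Lemma set2_eq (T : finType) (u v a b : T) :
  [set u; v] = [set a; b] -> (a = u /\ b = v) \/ (a = v /\ b = u).
Proof.
move=> E; have /set2P ha : a \in [set u; v] by rewrite E set21.
have /set2P hb : b \in [set u; v] by rewrite E set22.
have /set2P hu : u \in [set a; b] by rewrite -E set21.
have /set2P hv : v \in [set a; b] by rewrite -E set22.
by case: ha hb hu hv => ? [] ? [] ? [] ?; subst; tauto.
Qed.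

Section ProductsOfTwoTranspositions.
Variable T : finType.
Implicit Types (a b c d i j k l p q r z : T).

Lemma tperm_moved a b z : tperm a b z != z -> (z == a) || (z == b).
Proof. by case: tpermP => [->|->|]; rewrite ?eqxx ?orbT. Qed.

Lemma tperm_moves_at_most_two c d z1 z2 z3 : z1 != z2 -> z2 != z3 -> z1 != z3 ->
  tperm c d z1 != z1 -> tperm c d z2 != z2 -> tperm c d z3 != z3 -> False.
Proof.
move=> h12 h23 h13 /tperm_moved/orP[]/eqP e1 /tperm_moved/orP[]/eqP e2
  /tperm_moved/orP[]/eqP e3; subst; by rewrite ?eqxx in h12 h23 h13.
Qed.

Lemma mul_tperm_moves_first a b c d : a != b -> tperm a b * tperm c d != 1 ->
  (tperm a b * tperm c d) a != a.
Proof.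
move=> hab; apply: contra; rewrite permM tpermL => /eqP e.
suff -> : tperm c d = tperm a b by rewrite tperm2.
have : tperm c d b != b by rewrite e.
move=> /tperm_moved/orP[]/eqP eb.
  by rewrite eb tpermL in e; rewrite eb e tpermC.
by rewrite eb tpermR in e; rewrite eb e.
Qed.

Lemma mul_tperm_moves a b c d : a != b -> tperm a b * tperm c d != 1 ->
  (tperm a b * tperm c d) a != a /\ (tperm a b * tperm c d) b != b.
Proof.
move=> hab h1; split; first exact: mul_tperm_moves_first.
by rewrite tpermC in h1 *; apply: mul_tperm_moves_first; rewrite // eq_sym.
Qed.

Lemma mul_tperm_support i j k l z :
  (tperm i j * tperm k l) z != z -> z \in [:: i; j; k; l].
Proof.
apply: contraR; rewrite !inE !negb_or => /and4P[zi zj zk zl].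
by rewrite permM !tpermD // eq_sym.
Qed.

Lemma first_factor_support i j k l a b c d : a != b ->
  tperm i j * tperm k l != 1 -> tperm i j * tperm k l = tperm a b * tperm c d ->
  (a \in [:: i; j; k; l]) && (b \in [:: i; j; k; l]).
Proof.
move=> hab n1 E; rewrite E in n1.
have [ma mb] := mul_tperm_moves hab n1; rewrite -E in ma mb.
by rewrite !mul_tperm_support.
Qed.

Ltac eval_tperms := repeat (match goal with
 | |- context [?x == ?x] => rewrite eqxx
 | H : is_true (?x != ?y) |- context [?x == ?y] => rewrite (negbTE H)
 | H : is_true (?y != ?x) |- context [?x == ?y] => rewrite (eq_sym x y) (negbTE H)
 end; rewrite /=).

(* For disjoint (i j), (k l), the only ways to write (i j)(k l) as a product of
   two transpositions start with (i j) or (k l): a "crossing" first factor such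
   as (i k) would leave a second factor moving three points. *)
Lemma first_factor_disjoint i j k l a b c d :
  uniq [:: i; j; k; l] -> a != b ->
  tperm i j * tperm k l = tperm a b * tperm c d ->
  tperm a b \in [:: tperm i j; tperm k l].
Proof.
move=> /uniq4P[hij hik hil [hjk hjl hkl]] hab E.
have n1 : tperm i j * tperm k l != 1.
  apply: contraNneq hij => /permP/(_ i).
  by rewrite permM tpermL tpermD 1?eq_sym // perm1 => ->.
have /andP[ha hb] := first_factor_support hab n1 E; rewrite !inE in ha hb.
have Ecd z : tperm c d z = (tperm i j * tperm k l) (tperm a b z).
  by rewrite E permM tpermK.
have moves3 : tperm c d i != i -> tperm c d j != j -> tperm c d k != k -> False.
  exact: tperm_moves_at_most_two.
rewrite -[tperm a b \in _]orbb {2}tpermC.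
case/or4P: ha => /eqP ea; case/or4P: hb => /eqP eb; subst a b;
  rewrite !inE ?eqxx ?orbT //; try by rewrite eqxx in hab.
all: by exfalso; apply: moves3; rewrite !Ecd !permM !permE /=; eval_tperms.
Qed.

Lemma first_factor_triple p q r a b : a != b ->
  a \in [:: p; q; r] -> b \in [:: p; q; r] ->
  tperm a b \in [:: tperm p q; tperm q r; tperm p r].
Proof.
move=> hab ha hb; rewrite -[tperm a b \in _]orbb {2}tpermC.
move: ha hb; rewrite !inE => /or3P[]/eqP ea /or3P[]/eqP eb; subst a b;
  by rewrite ?eqxx ?orbT //; rewrite eqxx in hab.
Qed.

(* If (i j) and (k l) overlap, the product is supported on three points, so
   at most three first factors are possible. *)
Lemma first_factors_overlap i j k l : i != j -> k != l ->
  tperm i j * tperm k l != 1 -> k \in [:: i; j] ->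
  exists2 s : seq {perm T}, size s <= 3 & forall a b c d, a != b ->
    tperm i j * tperm k l = tperm a b * tperm c d -> tperm a b \in s.
Proof.
move=> hij hkl n1 hk.
have hl : l \notin [:: i; j].
  apply: contra n1 => hl; move: hk hl hkl; rewrite !inE => /orP[]/eqP-> /orP[]/eqP->;
    by rewrite ?eqxx // tpermC tperm2.
exists [:: tperm i j; tperm j l; tperm i l] => // a b c d hab E.
have /andP[ha hb] := first_factor_support hab n1 E.
have sub z : z \in [:: i; j; k; l] -> z \in [:: i; j; l].
  by move: hk; rewrite !inE => /orP[]/eqP-> /or4P[]->; rewrite ?orbT.
exact: first_factor_triple hab (sub a ha) (sub b hb).
Qed.

Lemma first_factors_few i j k l : i != j -> k != l ->
  tperm i j * tperm k l != 1 ->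
  exists2 s : seq {perm T}, size s <= 3 & forall a b c d, a != b ->
    tperm i j * tperm k l = tperm a b * tperm c d -> tperm a b \in s.
Proof.
move=> hij hkl n1.
have [hk|nk] := boolP (k \in [:: i; j]); first exact: first_factors_overlap.
have [hl|nl] := boolP (l \in [:: i; j]).
  by rewrite (tpermC k l) in n1 *; apply: first_factors_overlap; rewrite // eq_sym.
exists [:: tperm i j; tperm k l] => // a b c d hab E.
apply: first_factor_disjoint hab E; apply/uniq4P.
move: nk nl; rewrite !inE !negb_or ![k == _]eq_sym ![l == _]eq_sym.
by move=> /andP[? ?] /andP[? ?]; split; [..|split].
Qed.
End ProductsOfTwoTranspositions.

Section TranspositionGraph.
Variable n : nat.
Implicit Types (u w x y c : {perm 'I_n}).

Lemma CTP x y :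
  reflect (exists i j, i != j /\ x^-1 * y = tperm i j) (CT x y).
Proof.
apply: (iffP existsP) => [[i /existsP[j /andP[hij /eqP e]]]|[i [j [hij e]]]].
  by exists i, j.
by exists i; apply/existsP; exists j; rewrite hij e eqxx.
Qed.

Lemma CT_sym : symmetric (@CT n).
Proof.
suff imp x y : CT x y -> CT y x by move=> x y; apply/idP/idP; apply: imp.
case/CTP=> i [j [hij e]]; apply/CTP; exists i, j; split=> //.
by rewrite -tpermV -e invMg invgK.
Qed.

Lemma CT_odd x y : CT x y -> odd_perm y = ~~ odd_perm x.
Proof.
case/CTP=> i [j [hij e]]; have := odd_tperm i j.
by rewrite -e odd_permM odd_permV hij; case: (odd_perm x); case: (odd_perm y).
Qed.

(* CT_n is bipartite; in particular it has no triangle. *)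
Lemma CT_no_triangle x y c : CT x y -> CT y c -> CT x c -> False.
Proof.
move=> /CT_odd exy /CT_odd eyc /CT_odd exc; move: eyc; rewrite exc exy.
by case: (odd_perm x).
Qed.

(* Two distinct vertices of CT_n have at most three common neighbours: the
   common neighbours c of u and w correspond injectively (c |-> u^-1 c) to the
   first factors of u^-1 w as a product of two transpositions. *)
Lemma CT_common_neighbours u w (s : seq {perm 'I_n}) : u != w -> uniq s ->
  (forall c, c \in s -> CT u c && CT c w) -> size s <= 3.
Proof.
case: s => [//|c0 s0] nuw; set s := c0 :: s0 => Us hs.
have /andP[/CTP[i [j [hij ei]]] /CTP[k [l [hkl el]]]] := hs c0 (mem_head _ _).
have E c : u^-1 * w = (u^-1 * c) * (c^-1 * w) by rewrite mulgA mulgK.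
have n1 : tperm i j * tperm k l != 1 by rewrite -ei -el -E -eq_mulVg1.
have [t ht hf] := first_factors_few hij hkl n1.
rewrite -(size_map (mulg u^-1)); apply: leq_trans ht; apply: uniq_leq_size.
  by rewrite map_inj_uniq //; apply: mulgI.
move=> _ /mapP[c hc ->].
have /andP[/CTP[a [b [hab ea]]] /CTP[a' [b' [_ eb]]]] := hs c hc.
by rewrite ea; apply: hf hab _; rewrite -ei -el -E (E c) ea eb.
Qed.
End TranspositionGraph.

Lemma is_edge_of_set2 n (G : rel {perm 'I_n}) u v :
  symmetric G -> is_edge_of G [set u; v] -> G u v.
Proof.
move=> Gsym /existsP[a /existsP[b /andP[/eqP/set2_eq[[-> ->]|[-> ->]] g]]] //.
by rewrite Gsym.
Qed.

Lemma cyc4_rot n (p q r s : {perm 'I_n}) : cyc4_edges p q r s = cyc4_edges q r s p.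
Proof. by apply/setP => f; rewrite !inE; do 4!case: (f == _). Qed.

Lemma cyc4_rev n (p q r s : {perm 'I_n}) : cyc4_edges p q r s = cyc4_edges q p s r.
Proof.
rewrite /cyc4_edges [[set q; p]]setUC [[set p; s]]setUC [[set s; r]]setUC [[set r; q]]setUC.
by apply/setP => f; rewrite !inE; do 4!case: (f == _).
Qed.

Definition G_path n (G : rel {perm 'I_n}) (x a b y : {perm 'I_n}) : bool :=
  [&& uniq [:: x; a; b; y], G x a, G a b & G b y].

Definition good_C4 n (G : rel {perm 'I_n}) (x y : {perm 'I_n})
    (H : {set {set {perm 'I_n}}}) : bool :=
  [&& is_C4_of_CT H, [set x; y] \in H &
      [forall f in H, (f != [set x; y]) ==> is_edge_of G f]].

Section GoodFourCycles.
Variable n : nat.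
Variable G : rel {perm 'I_n}.
Hypothesis Gsym : symmetric G.
Variables x y : {perm 'I_n}.

Lemma path_of_good_C4 a b : uniq [:: x; a; b; y] ->
  (forall f, f \in cyc4_edges x a b y -> f != [set x; y] -> is_edge_of G f) ->
  G_path G x a b y.
Proof.
move=> U good; have /uniq4P[xa xb _ [_ ay yb]] := U.
have edge (u v : {perm 'I_n}) :
    u \notin [:: x; y] -> [set u; v] \in cyc4_edges x a b y -> G u v.
  move=> hu hin; apply: is_edge_of_set2 => //; apply: (good _ hin).
  apply: contra hu => /eqP/set2_eq[[<- _]|[_ <-]]; by rewrite !inE eqxx ?orbT.
rewrite /G_path U Gsym !edge //.
all: rewrite /cyc4_edges ?(setUC [set a] [set x]) ?inE ?negb_or ?eqxx ?orbT //.
all: by rewrite [_ == x]eq_sym ?xa ?xb ?ay ?yb.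
Qed.

Lemma good_C4_path H : good_C4 G x y H ->
  exists a b, H = cyc4_edges x a b y /\ G_path G x a b y.
Proof.
case/and3P=> /existsP[p /existsP[q /existsP[r /existsP[s]]]].
case/and5P=> U _ _ _ /andP[_ /eqP ->] {H} hxy /forall_inP good.
have {}good f : f \in cyc4_edges p q r s -> f != [set x; y] -> is_edge_of G f.
  by move=> /good/implyP.
wlog E : p q r s U good {hxy} / [set x; y] = [set p; q].
  move=> gen; rewrite /cyc4_edges !inE in hxy.
  case/orP: hxy => [/orP[/orP[|]|]|] /eqP E; first exact: gen.
  - by rewrite cyc4_rot in good *; apply: gen E; rewrite -(rot_uniq 1) in U.
  - by rewrite 2!cyc4_rot in good *; apply: gen E; rewrite -(rot_uniq 2) in U.
  - by rewrite 3!cyc4_rot in good *; apply: gen E; rewrite -(rot_uniq 3) in U.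
have [[hp hq]|[hp hq]] := set2_eq E; subst p q.
- exists s, r; have E' : cyc4_edges x y r s = cyc4_edges x s r y.
    by rewrite cyc4_rev cyc4_rot.
  rewrite E' in good *; split=> //; apply: (path_of_good_C4 _ good).
  by rewrite -rev_uniq -(rot_uniq 3) in U.
- exists r, s; rewrite cyc4_rot in good *; split=> //.
  by apply: (path_of_good_C4 _ good); rewrite -(rot_uniq 1) in U.
Qed.
End GoodFourCycles.

Lemma pairs_share_same_side (T : eqType) (a1 b1 a2 b2 a3 b3 : T) :
  (a1 == a2) (+) (b1 == b2) -> (a1 == a3) (+) (b1 == b3) ->
  (a2 == a3) (+) (b2 == b3) -> (a1 = a2 /\ a2 = a3) \/ (b1 = b2 /\ b2 = b3).
Proof.
move=> h12 h13 h23; have [e12|n12] := eqVneq a1 a2.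
  left; split=> //; apply/eqP; apply: contraTT h12 => n23.
  move: h13 h23; rewrite e12 (negbTE n23) !addFb => /eqP-> /eqP->.
  by rewrite !eqxx.
rewrite (negbTE n12) addFb in h12; right; split; first exact/eqP.
apply/eqP; apply: contraTT h13 => n23; move/eqP: h12 => ->.
move: h23; rewrite (negbTE n23) addbF => /eqP <-.
by rewrite (negbTE n12).
Qed.

Section CountingGPaths.
Variable n : nat.
Variable G : rel {perm 'I_n}.
Hypothesis Gsym : symmetric G.
Hypothesis Gsub : forall u v, G u v -> CT u v.
Variables x y : {perm 'I_n}.
Hypothesis hxy : CT x y.

Lemma G_path_rev a b : G_path G x a b y -> G_path G y b a x.
Proof.
case/and4P=> U ga gab gb; rewrite /G_path -rev_uniq U.
by rewrite Gsym gb Gsym gab Gsym ga.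
Qed.

Lemma G_paths_C6 a b a' b' : G_path G x a b y -> G_path G x a' b' y ->
  a != a' -> b != b' -> has_C6 G.
Proof.
case/and4P=> /uniq4P[xa xb xy [ab ay by_]] ga gab gb.
case/and4P=> /uniq4P[xa' xb' _ [ab' ay' by']] ga' gab' gb' naa nbb.
have ab'' : a != b'.
  by apply/eqP => e; rewrite -e in gb'; apply: CT_no_triangle (Gsub ga) (Gsub gb') hxy.
have ba' : b != a'.
  by apply/eqP => e; rewrite e in gb; apply: CT_no_triangle (Gsub ga') (Gsub gb) hxy.
set s := [:: x; a; b; y; b'; a'].
have Us : uniq s.
  rewrite /s /= !inE !negb_or (eq_sym y b') (eq_sym y a') (eq_sym b' a').
  by rewrite xa xb xy xb' xa' ab ay ab'' naa by_ nbb ba' by' ay' ab'.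
exists (fun i : 'I_6 => nth x s i); split.
  by move=> i j /eqP; rewrite nth_uniq // => /eqP/val_inj.
by case=> -[|[|[|[|[|[|//]]]]]] Hi; rewrite //= Gsym.
Qed.

Lemma G_paths_share_one a b a' b' : ~ has_C6 G ->
  G_path G x a b y -> G_path G x a' b' y ->
  (a, b) != (a', b') -> (a == a') (+) (b == b').
Proof.
move=> noC6 p p' neq; case: (eqVneq a a') => [ea|na]; case: (eqVneq b b') => [eb|nb] //.
- by rewrite ea eb eqxx in neq.
- by case: noC6; apply: G_paths_C6 p p' na nb.
Qed.

(* Three G-paths x - a - b_i - y with distinct b_i are impossible: a and y
   would have the four common neighbours x, b_1, b_2, b_3 in CT_n. *)
Lemma G_paths_fan a b1 b2 b3 : G_path G x a b1 y -> G_path G x a b2 y ->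
  G_path G x a b3 y -> uniq [:: b1; b2; b3] -> False.
Proof.
move=> /and4P[/uniq4P[_ xb1 _ [_ ay _]] ga g1 h1] /and4P[/uniq4P[_ xb2 _ _] _ g2 h2].
move=> /and4P[/uniq4P[_ xb3 _ _] _ g3 h3] U.
suff : size [:: x; b1; b2; b3] <= 3 by [].
apply: (CT_common_neighbours ay); first by rewrite cons_uniq U !inE !negb_or xb1 xb2 xb3.
move=> c; rewrite !inE => /or4P[]/eqP->; rewrite ?hxy ?andbT.
  by rewrite CT_sym Gsub.
all: by rewrite !Gsub.
Qed.
End CountingGPaths.

Theorem mainTheorem13 (n : nat) (hn : 3 <= n) (G : rel {perm 'I_n})
  (Gsym : symmetric G) (Gsub : forall x y, G x y -> CT x y)
  (noC6 : ~ has_C6 G) (x y : {perm 'I_n}) (hxy : CT x y) :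
  #|[set H : {set {set {perm 'I_n}}} |
      [&& is_C4_of_CT H, [set x; y] \in H &
          [forall f in H, (f != [set x; y]) ==> is_edge_of G f]]]| <= 2.
Proof.
rewrite leqNgt; apply/card_gt2P => -[H1 [H2 [H3 [[i1 i2 i3] [n12 n23 n31]]]]].
rewrite !inE in i1 i2 i3.
have [a1 [b1 [E1 p1]]] := good_C4_path Gsym i1.
have [a2 [b2 [E2 p2]]] := good_C4_path Gsym i2.
have [a3 [b3 [E3 p3]]] := good_C4_path Gsym i3.
rewrite E1 E2 E3 in n12 n23 n31.
have share := G_paths_share_one Gsym Gsub hxy noC6.
have s12 : (a1 == a2) (+) (b1 == b2).
  by apply: share p1 p2 _; apply: contra n12 => /eqP[-> ->].
have s13 : (a1 == a3) (+) (b1 == b3).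
  by apply: share p1 p3 _; rewrite eq_sym in n31; apply: contra n31 => /eqP[-> ->].
have s23 : (a2 == a3) (+) (b2 == b3).
  by apply: share p2 p3 _; apply: contra n23 => /eqP[-> ->].
case: (pairs_share_same_side s12 s13 s23) => [[e12 e23]|[e12 e23]]; subst.
  rewrite eqxx !addTb in s12 s13 s23; apply: (G_paths_fan Gsub hxy p1 p2 p3).
  by rewrite /= !inE !negb_or s12 s13 s23.
rewrite eqxx !addbT in s12 s13 s23; have hyx : CT y x by rewrite CT_sym.
apply: (G_paths_fan Gsub hyx (G_path_rev Gsym p1) (G_path_rev Gsym p2) (G_path_rev Gsym p3)).
by rewrite /= !inE !negb_or s12 s13 s23.
Qed.
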